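(* Let $(\Omega,+)$ be a group and $x,a,y,b,z\subseteq\Omega$ arbitrary subsets. Then: (1) $\Gamma(b,z,y,x,a)=-\Gamma(x,a,y,b,z)$, $\Gamma(z,b,y,a,x)=\check\Gamma(x,a,y,b,z)$ and $\Gamma(a,x,y,z,b)=-\check\Gamma(x,a,y,b,z)$; and if $x,a,y,b,z$ are all symmetric subsets, then $\Gamma(x,a,y,b,z)=\Gamma(a,x,y,z,b)$. (2) For each $\sigma$ in the Klein group $\{\mathrm{id},(\xi\omega)(\zeta\eta),(\xi\eta)(\zeta\omega),(\xi\zeta)(\eta\omega)\}$ of permutations of the six letters, one has $\sigma.\mathbf\Gamma=\mathbf\Gamma^{s}$ for a sign vector $s$ whose entries in the $\xi,\zeta,\eta,\omega$ positions are all $+1$; i.e. if signed versions differing only by sign changes in $\alpha$ or $\beta$ are regarded as equivalent, the equivalence class of $\mathbf\Gamma$ is invariant under this Klein group.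
   Context: $(\Omega,+)$ is a group written additively but not necessarily abelian. $\Gamma(x,a,y,b,z)=\{\omega:\exists\alpha\in a,\beta\in b:\ \alpha+\omega+\beta\in y,\ \alpha+\omega\in z,\ \omega+\beta\in x\}$, $\check\Gamma(x,a,y,b,z)=\{\omega:\exists\alpha\in a,\beta\in b:\ \beta+\omega+\alpha\in y,\ \omega+\alpha\in z,\ \beta+\omega\in x\}$; for a subset $u$, $-u=\{-\mu:\mu\in u\}$, and $u$ is symmetric if $-u=u$. The structure space is $\mathbf\Gamma=\{(\xi,\zeta,\alpha,\beta,\eta,\omega)\in\Omega^6:\ \eta=\alpha+\omega+\beta,\ \zeta=\alpha+\omega,\ \xi=\omega+\beta\}$. For a sign vector $s=(s_1,\dots,s_6)\in\{\pm1\}^6$, $\mathbf\Gamma^s=\{(\xi,\zeta,\alpha,\beta,\eta,\omega): (s_1\xi,s_2\zeta,s_3\alpha,s_4\beta,s_5\eta,s_6\omega)\in\mathbf\Gamma\}$. For a permutation $\sigma$ of the letters $\{\xi,\zeta,\alpha,\beta,\eta,\omega\}$, $\sigma.\mathbf\Gamma$ is the set of $(\xi,\zeta,\alpha,\beta,\eta,\omega)\in\Omega^6$ satisfying the equations obtained by renaming each letter $v$ to $\sigma(v)$, namely $\sigma(\eta)=\sigma(\alpha)+\sigma(\omega)+\sigma(\beta)$, $\sigma(\zeta)=\sigma(\alpha)+\sigma(\omega)$, $\sigma(\xi)=\sigma(\omega)+\sigma(\beta)$. *)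

From Stdlib Require Import List.
Import ListNotations.

Record IsGroup {G : Type} (add : G -> G -> G) (opp : G -> G) (zero : G) : Prop := {
  grp_assoc : forall u v w, add u (add v w) = add (add u v) w;
  grp_zero_l : forall u, add zero u = u;
  grp_zero_r : forall u, add u zero = u;
  grp_opp_l : forall u, add (opp u) u = zero;
  grp_opp_r : forall u, add u (opp u) = zero }.

Definition subset (G : Type) := G -> Prop.

Definition set_eq {G : Type} (A B : subset G) : Prop := forall w, A w <-> B w.

Definition neg_set {G : Type} (opp : G -> G) (u : subset G) : subset G :=
  fun w => exists mu, u mu /\ w = opp mu.

Definition symmetric_set {G : Type} (opp : G -> G) (u : subset G) : Prop :=
  set_eq (neg_set opp u) u.

Definition Gamma {G : Type} (add : G -> G -> G) (x a y b z : subset G) : subset G :=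
  fun w => exists al be, a al /\ b be /\ y (add (add al w) be) /\
                         z (add al w) /\ x (add w be).

Definition Gamma_check {G : Type} (add : G -> G -> G) (x a y b z : subset G) : subset G :=
  fun w => exists al be, a al /\ b be /\ y (add (add be w) al) /\
                         z (add w al) /\ x (add be w).

(* The six letters xi, zeta, alpha, beta, eta, omega; a point of Omega^6 is a
   function from letters to Omega. *)
Inductive letter := Xi | Zeta | Alpha | Beta | Eta | Omega.

Definition StructGamma {G : Type} (add : G -> G -> G) (v : letter -> G) : Prop :=
  v Eta = add (add (v Alpha) (v Omega)) (v Beta) /\
  v Zeta = add (v Alpha) (v Omega) /\
  v Xi = add (v Omega) (v Beta).

Inductive sign := Plus | Minus.
Definition sign_act {G : Type} (opp : G -> G) (s : sign) (g : G) : G :=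
  match s with Plus => g | Minus => opp g end.

Definition StructGamma_signed {G : Type} (add : G -> G -> G) (opp : G -> G)
  (s : letter -> sign) (v : letter -> G) : Prop :=
  StructGamma add (fun l => sign_act opp (s l) (v l)).

Definition StructGamma_perm {G : Type} (add : G -> G -> G)
  (sigma : letter -> letter) (v : letter -> G) : Prop :=
  StructGamma add (fun l => v (sigma l)).

Definition perm_id (l : letter) : letter := l.
Definition perm_xo_ze (l : letter) : letter :=
  match l with Xi => Omega | Omega => Xi | Zeta => Eta | Eta => Zeta | l => l end.
Definition perm_xe_zo (l : letter) : letter :=
  match l with Xi => Eta | Eta => Xi | Zeta => Omega | Omega => Zeta | l => l end.
Definition perm_xz_eo (l : letter) : letter :=
  match l with Xi => Zeta | Zeta => Xi | Eta => Omega | Omega => Eta | l => l end.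

Definition klein_group : list (letter -> letter) :=
  [perm_id; perm_xo_ze; perm_xe_zo; perm_xz_eo].

(** The identities of part (1) are changes of the witnesses [(α, β)] (the third
    one is the composite of the first two): reading
    [α + ω] and [ω + β] as the new witnesses exchanges the roles of [x, a] with
    [b, z] and replaces [ω] by [-ω]; for symmetric sets the witnesses
    [-(ω + β)] and [-(α + ω)] exchange [x] with [a] and [b] with [z] while keeping
    [ω].  For part (2), each permutation of the Klein group turns the three
    defining equations of [𝚪] into a system that can be solved back for [η], [ζ]
    and [ξ]; the solution has the shape of the original system once [α] and/or
    [β] are replaced by their opposites. *)

From Stdlib Require Import List.

Section Group.

Context {G : Type} {add : G -> G -> G} {opp : G -> G} {zero : G}.
Hypothesis HG : IsGroup add opp zero.

Lemma addA u v w : add (add u v) w = add u (add v w).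
Proof. symmetry; apply (grp_assoc _ _ _ HG). Qed.

Lemma add0g u : add zero u = u.
Proof. apply (grp_zero_l _ _ _ HG). Qed.

Lemma addg0 u : add u zero = u.
Proof. apply (grp_zero_r _ _ _ HG). Qed.

Lemma addNg u : add (opp u) u = zero.
Proof. apply (grp_opp_l _ _ _ HG). Qed.

Lemma addgN u : add u (opp u) = zero.
Proof. apply (grp_opp_r _ _ _ HG). Qed.

Lemma addKg u w : add (opp u) (add u w) = w.
Proof. now rewrite <- addA, addNg, add0g. Qed.

Lemma addNKg u w : add u (add (opp u) w) = w.
Proof. now rewrite <- addA, addgN, add0g. Qed.

Lemma opp_unique p q : add p q = zero -> p = opp q.
Proof. intro Hpq. now rewrite <- (addg0 p), <- (addgN q), <- addA, Hpq, add0g. Qed.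

Lemma oppgK u : opp (opp u) = u.
Proof. symmetry; apply opp_unique, addgN. Qed.

Lemma oppgD u v : opp (add u v) = add (opp v) (opp u).
Proof. symmetry; apply opp_unique. now rewrite addA, addKg, addNg. Qed.

Ltac group_simpl :=
  repeat rewrite ?addA, ?add0g, ?addg0, ?addNg, ?addgN, ?addKg, ?addNKg,
    ?oppgK, ?oppgD in *.

Lemma symmetric_set_opp (u : subset G) p : symmetric_set opp u -> u p -> u (opp p).
Proof. intros Su Hp. apply Su. now exists p. Qed.

Lemma Gamma_opp_mirror x a y b z w :
  Gamma add x a y b z w -> Gamma add b z y x a (opp w).
Proof.
  intros (al & be & Ha & Hb & Hy & Hz & Hx).
  exists (add al w), (add w be).
  repeat split; group_simpl; assumption.
Qed.

Lemma Gamma_mirror x a y b z :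
  set_eq (Gamma add b z y x a) (neg_set opp (Gamma add x a y b z)).
Proof.
  intro w; split.
  - intros Hw. exists (opp w). split.
    + apply Gamma_opp_mirror, Hw.
    + now rewrite oppgK.
  - intros (mu & Hmu & ->). now apply Gamma_opp_mirror.
Qed.

Lemma Gamma_sub_swap_of_symmetric x a y b z :
  symmetric_set opp x -> symmetric_set opp a -> symmetric_set opp y ->
  symmetric_set opp b -> symmetric_set opp z ->
  forall w, Gamma add x a y b z w -> Gamma add a x y z b w.
Proof.
  intros Sx Sa Sy Sb Sz w (al & be & Ha & Hb & Hy & Hz & Hx).
  apply (symmetric_set_opp _ _ Sa) in Ha; apply (symmetric_set_opp _ _ Sb) in Hb;
  apply (symmetric_set_opp _ _ Sy) in Hy; apply (symmetric_set_opp _ _ Sz) in Hz;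
  apply (symmetric_set_opp _ _ Sx) in Hx.
  exists (opp (add w be)), (opp (add al w)).
  repeat split; group_simpl; assumption.
Qed.

Definition alpha_beta_signs (sa sb : sign) (l : letter) : sign :=
  match l with Alpha => sa | Beta => sb | _ => Plus end.

Lemma StructGamma_perm_klein sigma : In sigma klein_group ->
  exists sa sb, forall v,
    StructGamma_perm add sigma v <-> StructGamma_signed add opp (alpha_beta_signs sa sb) v.
Proof.
  cbn; intros [<- | [<- | [<- | [<- | []]]]];
    [exists Plus, Plus | exists Plus, Minus | exists Minus, Plus | exists Minus, Minus];
    intro v; cbv beta iota delta [StructGamma_perm StructGamma_signed StructGamma
      perm_id perm_xo_ze perm_xe_zo perm_xz_eo alpha_beta_signs sign_act];
    generalize (v Xi) (v Zeta) (v Alpha) (v Beta) (v Eta) (v Omega);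
    intros xi ze al be et om;
    split; intros (-> & -> & ->); repeat split; group_simpl; reflexivity.
Qed.

End Group.

Lemma set_eq_trans {G : Type} (u v w : subset G) :
  set_eq u v -> set_eq v w -> set_eq u w.
Proof. intros Huv Hvw p. exact (iff_trans (Huv p) (Hvw p)). Qed.

Lemma neg_set_eq {G : Type} (opp : G -> G) (u v : subset G) :
  set_eq u v -> set_eq (neg_set opp u) (neg_set opp v).
Proof.
  intros Huv p; split; intros (mu & Hmu & ->); exists mu; split; auto; apply Huv, Hmu.
Qed.

Lemma Gamma_swap_check {G : Type} (add : G -> G -> G) (x a y b z : subset G) :
  set_eq (Gamma add z b y a x) (Gamma_check add x a y b z).
Proof. intro w; split; intros (al & be & H); exists be, al; tauto. Qed.

Theorem theorem9p8 (G : Type) (add : G -> G -> G) (opp : G -> G) (zero : G)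
  (HG : IsGroup add opp zero) (x a y b z : subset G) :
  (* part (1) *)
  (set_eq (Gamma add b z y x a) (neg_set opp (Gamma add x a y b z)) /\
   set_eq (Gamma add z b y a x) (Gamma_check add x a y b z) /\
   set_eq (Gamma add a x y z b) (neg_set opp (Gamma_check add x a y b z)) /\
   (symmetric_set opp x -> symmetric_set opp a -> symmetric_set opp y ->
    symmetric_set opp b -> symmetric_set opp z ->
    set_eq (Gamma add x a y b z) (Gamma add a x y z b))) /\
  (* part (2) *)
  (forall sigma : letter -> letter, In sigma klein_group ->
   exists s : letter -> sign,
     s Xi = Plus /\ s Zeta = Plus /\ s Eta = Plus /\ s Omega = Plus /\
     forall v : letter -> G,
       StructGamma_perm add sigma v <-> StructGamma_signed add opp s v).
Proof.
  split; [split; [|split; [|split]] |].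
  - exact (Gamma_mirror HG x a y b z).
  - apply Gamma_swap_check.
  - apply (set_eq_trans _ _ _ (Gamma_mirror HG z b y a x)), neg_set_eq, Gamma_swap_check.
  - intros Sx Sa Sy Sb Sz w; split; apply (Gamma_sub_swap_of_symmetric HG); assumption.
  - intros sigma Hsigma.
    destruct (StructGamma_perm_klein HG sigma Hsigma) as (sa & sb & Hs).
    now exists (alpha_beta_signs sa sb).
Qed.
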